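(* Let $f$ be a $p$-minimal newform such that $\pi_p$ is a ramified principal series representation, so that $\pi_p\cong\pi(\mu_1,\mu_2)$ with $\mu_1$ unramified and $\omega_p:=\mu_1\mu_2$ of conductor exponent $N_p\ge1$. Then: (i) for $p\ge5$: $a(\mathrm{sym}^3(\pi_p))=3N_p$ if $N_p>1$ or if $N_p=1$ and $\omega_p|_{\mathbb{Z}_p^\times}$ has order $>3$; otherwise $a(\mathrm{sym}^3(\pi_p))=3N_p-1$; (ii) for $p=3$: $a(\mathrm{sym}^3(\pi_3))=2N_3$ if $N_3=2$ and $\omega_3|_{\mathbb{Z}_3^\times}$ has order $3$; otherwise $a(\mathrm{sym}^3(\pi_3))=3N_3-1$; (iii) for $p=2$: $a(\mathrm{sym}^3(\pi_2))=3N_2-1$ if $N_2>3$, and $=2N_2$ otherwise.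
   Context: $f\in S_k(N,\epsilon)$ newform with local component $\pi_p$ at $p$; $N=p^{N_p}N'$, $p\nmid N'$. $p$-minimal: the $p$-part of the level is minimal among all twists of $f$ by Dirichlet characters. The $L$-parameter of $\pi(\mu_1,\mu_2)$ is $\mu_1\oplus\mu_2$ with zero monodromy. $\mathrm{sym}^3(\pi_p)$ is the representation of $\mathrm{GL}_4(\mathbb{Q}_p)$ with $L$-parameter the third symmetric power of that of $\pi_p$; $a(\cdot)$ is the conductor exponent. Conductor exponent of a character $\chi$ of $\mathbb{Q}_p^\times$: $0$ if $\chi|_{\mathbb{Z}_p^\times}=1$, otherwise the least $n\ge1$ with $\chi|_{1+p^n\mathbb{Z}_p}=1$. *)

From Stdlib Require Import ClassicalEpsilon.
From mathcomp Require Import all_boot all_order all_algebra all_field.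

Set Implicit Arguments.
Unset Strict Implicit.
Unset Printing Implicit Defensive.

Import Order.TTheory GRing.Theory Num.Theory.
Local Open Scope ring_scope.

(* A (smooth) character of Z_p^x is modelled by its values on the dense subset
   of natural numbers prime to p (extended by 0 on multiples of p): a
   completely multiplicative function nat -> algC, periodic modulo some p^n,
   vanishing exactly on multiples of p (i.e. a Dirichlet character of
   p-power modulus).  Continuous characters Z_p^x -> C^x are exactly these. *)
Definition is_char_Zpx (p : nat) (chi : nat -> algC) : Prop :=
  [/\ exists n : nat, forall a : nat, chi (a + p ^ n)%N = chi a,
      forall a : nat, (chi a == 0) = (p %| a)%N
    & forall a b : nat, chi (a * b)%N = chi a * chi b].

(* A character of Q_p^x = p^Z x Z_p^x : its restriction to Z_p^x and its
   value at the uniformizer p. *)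
Record qpchar := QpChar { qres : nat -> algC; qatp : algC }.

Definition valid_qpchar (p : nat) (mu : qpchar) : Prop :=
  is_char_Zpx p (qres mu) /\ qatp mu != 0.

Definition qmul (mu nu : qpchar) : qpchar :=
  QpChar (fun a => qres mu a * qres nu a) (qatp mu * qatp nu).

(* chi is trivial on 1 + p^n Z_p (for n = 0: on all of Z_p^x). *)
Definition trivial_on (p : nat) (chi : nat -> algC) (n : nat) : Prop :=
  forall a : nat, coprime a p -> a = 1 %[mod p ^ n] -> chi a = 1.

Definition cond_exp (p : nat) (mu : qpchar) : nat :=
  epsilon (inhabits 0%N)
    (fun n => trivial_on p (qres mu) n /\
              forall m, trivial_on p (qres mu) m -> (n <= m)%N).

Definition unramified (p : nat) (mu : qpchar) : Prop :=
  trivial_on p (qres mu) 0.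

Definition res_order (p : nat) (mu : qpchar) : nat :=
  epsilon (inhabits 0%N)
    (fun k => (0 < k)%N /\
       (forall a, coprime a p -> qres mu a ^+ k = 1) /\
       forall m, (0 < m)%N -> (forall a, coprime a p -> qres mu a ^+ m = 1) ->
         (k <= m)%N).

(* A Weil-Deligne representation with zero monodromy which is a direct sum of
   characters is modelled by the list of these characters; its conductor
   exponent is the sum of the conductor exponents. *)
Definition wd_cond (p : nat) (phi : seq qpchar) : nat :=
  sumn [seq cond_exp p mu | mu <- phi].

Definition Lparam_ps (mu1 mu2 : qpchar) : seq qpchar := [:: mu1; mu2].

Definition sym3 (mu1 mu2 : qpchar) : seq qpchar :=
  [:: qmul mu1 (qmul mu1 mu1); qmul (qmul mu1 mu1) mu2;
      qmul mu1 (qmul mu2 mu2); qmul mu2 (qmul mu2 mu2)].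

Definition ps_cond (p : nat) (mu1 mu2 : qpchar) : nat :=
  wd_cond p (Lparam_ps mu1 mu2).

(* p-minimality of pi(mu1,mu2): its conductor is minimal among all twists
   pi(mu1,mu2) (x) chi = pi(mu1 chi, mu2 chi). *)
Definition p_minimal (p : nat) (mu1 mu2 : qpchar) : Prop :=
  forall chi : qpchar, valid_qpchar p chi ->
    (ps_cond p mu1 mu2 <= ps_cond p (qmul mu1 chi) (qmul mu2 chi))%N.

From mathcomp Require Import all_boot all_order all_algebra all_field cyclic zify.
From Stdlib Require Import ClassicalEpsilon Wf_nat FunctionalExtensionality.

Set Implicit Arguments.
Unset Strict Implicit.
Unset Printing Implicit Defensive.

Import GRing.Theory.

(* With mu1 unramified, sym^3(mu1 + mu2) = mu1^3 + mu1^2 mu2 + mu1 mu2^2 + mu2^3 has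
   conductor exponent a(chi) + a(chi^2) + a(chi^3), where chi = mu2 = omega on Z_p^x and
   a(chi) = N.  On the pro-p group 1 + p Z_p the character chi has p-power order, so for
   N >= 2 every power chi^k with p not dividing k has conductor exponent N.  Raising to the
   p-th power maps 1 + p^(N-2) to a generator of 1 + p^(N-1) modulo 1 + p^N as soon as
   N >= 3 (N >= 4 for p = 2), hence a(chi^p) = N - 1 there.  The remaining small levels
   are settled by the order of chi on Z_p^x, using a^2 = 1 mod 3 for p = 3 and
   a^2 = 1 mod 8 for p = 2. *)

Lemma expn_1addM_modsq q s e : (1 + q * s) ^ e = 1 + e * s * q %[mod q ^ 2].
Proof.
elim: e => [|e IHe]; first by rewrite expn0 !mul0n addn0.
rewrite expnSr -modnMml IHe modnMml.
have -> : (1 + e * s * q) * (1 + q * s) = 1 + e.+1 * s * q + (e * s * s) * q ^ 2.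
  by rewrite expnS expn1; nia.
by rewrite addnC modnMDl.
Qed.

Lemma modn1_decomp q x : 1 < q -> x = 1 %[mod q] -> x = 1 + q * (x %/ q).
Proof. by move=> q_gt1 x1; rewrite {1}(divn_eq x q) x1 modn_small // mulnC addnC. Qed.

Lemma eq_modn_expn_le p m m' x y : m <= m' -> x = y %[mod p ^ m'] -> x = y %[mod p ^ m].
Proof.
move=> le_mm' xy; have dv : p ^ m %| p ^ m' by rewrite dvdn_exp2l.
by rewrite -(modn_dvdm x dv) xy modn_dvdm.
Qed.

Lemma coprime_of_eq1_mod p m x : prime p -> 0 < m -> x = 1 %[mod p ^ m] -> coprime x p.
Proof.
move=> p_pr m_gt0 /(eq_modn_expn_le m_gt0); rewrite expn1 => x1.
rewrite coprime_sym prime_coprime //; apply/negP => /eqP; rewrite x1.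
by rewrite modn_small ?prime_gt1 //; move/eqP.
Qed.

Lemma expn_prime_mod1 p m a : 1 < p -> 0 < m -> a = 1 %[mod p ^ m] ->
  a ^ p = 1 %[mod p ^ m.+1].
Proof.
move=> p_gt1 m_gt0 a1; have q_gt1 : 1 < p ^ m by rewrite -(expn0 p) ltn_exp2l.
have dv : p ^ m.+1 %| (p ^ m) ^ 2 by rewrite -expnM dvdn_exp2l //; lia.
rewrite (modn1_decomp q_gt1 a1) -(modn_dvdm _ dv) expn_1addM_modsq (modn_dvdm _ dv).
by rewrite -mulnA mulnC -mulnA -expnSr addnC modnMDl.
Qed.

Lemma expn_expn_prime_mod1 p j a : 1 < p -> a = 1 %[mod p] ->
  a ^ (p ^ j) = 1 %[mod p ^ j.+1].
Proof.
move=> p_gt1 a1; elim: j => [|j IHj]; first by rewrite !expn1.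
by rewrite expnSr expnM expn_prime_mod1.
Qed.

Lemma modn_1add3X_cube N : 2 < N -> (1 + 3 ^ (N - 2)) ^ 3 = 1 + 3 ^ (N - 1) %[mod 3 ^ N].
Proof.
move=> N_gt2; have [j ->] : exists j, N = j.+3 by exists (N - 3); lia.
rewrite !subSS !subn0; set y := 3 ^ j.
have -> : (1 + 3 ^ j.+1) ^ 3 = 1 + 3 ^ j.+2 + (y + y * y) * 3 ^ j.+3.
  by rewrite /y !expnS expn0; nia.
by rewrite addnC modnMDl.
Qed.

Lemma modn_1add2X_sqr N : 3 < N -> (1 + 2 ^ (N - 2)) ^ 2 = 1 + 2 ^ (N - 1) %[mod 2 ^ N].
Proof.
move=> N_gt3; have [j ->] : exists j, N = j.+4 by exists (N - 4); lia.
rewrite !subSS !subn0; set y := 2 ^ j.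
have -> : (1 + 2 ^ j.+2) ^ 2 = 1 + 2 ^ j.+3 + y * 2 ^ j.+4.
  by rewrite /y !expnS expn0; nia.
by rewrite addnC modnMDl.
Qed.

Lemma sqr_odd_mod8 a : odd a -> a ^ 2 = 1 %[mod 8].
Proof.
move=> a_odd; rewrite -modnXm.
have := ltn_pmod a (isT : 0 < 8); have : odd (a %% 8) by rewrite odd_mod.
by move: (a %% 8); do 8?[case=> //].
Qed.

Definition pow_char (k : nat) (f : nat -> algC) (a : nat) : algC := (f a ^+ k)%R.

Lemma pow_char1 f : pow_char 1 f = f.
Proof. by apply: functional_extensionality => a; rewrite /pow_char expr1. Qed.

Lemma trivial_on0 p f : trivial_on p f 0 <-> forall a, coprime a p -> f a = 1%R.
Proof. by split=> f1 a ap; [apply: f1; rewrite // expn0 !modn1 | rewrite f1]. Qed.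

Lemma trivial_on_le p f m m' : m <= m' -> trivial_on p f m -> trivial_on p f m'.
Proof. by move=> le_mm' f1 a ap /(eq_modn_expn_le le_mm'); apply: f1. Qed.

Lemma trivial_on_pow p f k m : trivial_on p f m -> trivial_on p (pow_char k f) m.
Proof. by move=> f1 a ap a1; rewrite /pow_char f1 ?expr1n. Qed.

Lemma eq_trivial_on p f g m : (forall a, coprime a p -> f a = g a) ->
  trivial_on p f m -> trivial_on p g m.
Proof. by move=> fg f1 a ap a1; rewrite -fg // f1. Qed.

Definition is_cond_exp (p : nat) (f : nat -> algC) (n : nat) : Prop :=
  trivial_on p f n /\ forall m, trivial_on p f m -> n <= m.

Lemma exists_least (P : nat -> Prop) : (exists n, P n) ->
  exists n, P n /\ forall m, P m -> n <= m.
Proof.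
move=> /(dec_inh_nat_subset_has_unique_least_element _
           (fun n => classic (P n))) [n [[Pn n_min] _]].
by exists n; split=> // m /n_min/leP.
Qed.

Lemma exists_is_cond_exp p f : (exists n, trivial_on p f n) -> exists c, is_cond_exp p f c.
Proof. exact: exists_least. Qed.

Lemma is_cond_exp_unique p f m n : is_cond_exp p f m -> is_cond_exp p f n -> m = n.
Proof. by move=> [fm m_min] [fn n_min]; apply/eqP; rewrite eqn_leq m_min ?n_min. Qed.

Lemma is_cond_exp_intro p f n : trivial_on p f n -> ~ trivial_on p f n.-1 -> is_cond_exp p f n.
Proof.
move=> fn fNpred; split=> // m fm; rewrite leqNgt; apply/negP => lt_mn.
by apply: fNpred; apply: trivial_on_le fm; lia.
Qed.

Lemma is_cond_exp_eq0 p f c : is_cond_exp p f c -> (c = 0 <-> trivial_on p f 0).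
Proof. by case=> fc c_min; split=> [c0 | f0]; [rewrite -c0 | apply/eqP; rewrite -leqn0 c_min]. Qed.

Lemma cond_exp_eq p mu f n : is_cond_exp p f n ->
  (forall a, coprime a p -> qres mu a = f a) -> cond_exp p mu = n.
Proof.
move=> fn muf; have gf : forall a, coprime a p -> f a = qres mu a by move=> a /muf.
have [mu_c c_min] : is_cond_exp p (qres mu) (cond_exp p mu).
  apply: (@epsilon_spec _ (inhabits 0) (is_cond_exp p (qres mu))); apply: exists_is_cond_exp.
  by exists n; apply: eq_trivial_on gf fn.1.
apply: is_cond_exp_unique fn; split; first exact: eq_trivial_on mu_c.
by move=> m /(eq_trivial_on gf); apply: c_min.
Qed.

Definition unit_order (p : nat) (f : nat -> algC) (d : nat) : Prop :=
  [/\ 0 < d, trivial_on p (pow_char d f) 0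
    & forall m, 0 < m -> trivial_on p (pow_char m f) 0 -> d <= m].

Lemma res_orderP p mu f : (forall a, coprime a p -> qres mu a = f a) ->
  (exists k, 0 < k /\ trivial_on p (pow_char k f) 0) -> unit_order p f (res_order p mu).
Proof.
move=> muf fk.
have powE k : trivial_on p (pow_char k f) 0 <-> forall a, coprime a p -> (qres mu a ^+ k = 1)%R.
  rewrite trivial_on0; split=> f1 a ap; have := f1 a ap; by rewrite /pow_char muf.
have ex : exists k, 0 < k /\ (forall a, coprime a p -> (qres mu a ^+ k = 1)%R) /\
    forall m, 0 < m -> (forall a, coprime a p -> (qres mu a ^+ m = 1)%R) -> k <= m.
  have [k [[k_gt0 fk1] k_min]] := exists_least fk.
  exists k; split=> //; split=> [|m m_gt0 fm]; first exact/powE.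
  by apply: k_min; split=> //; apply/powE.
have [d_gt0 [fd d_min]] := epsilon_spec (inhabits 0) _ ex.
by split=> // [|m m_gt0 /powE]; [apply/powE | apply: d_min].
Qed.

Lemma is_cond_exp_pow_eq0 p f d k c : unit_order p f d -> is_cond_exp p (pow_char k f) c ->
  (c == 0) = (d %| k).
Proof.
move=> [d_gt0 /trivial_on0 fd d_min] /is_cond_exp_eq0 c0.
apply/eqP/idP => [/c0/trivial_on0 fk | /dvdnP[q k_eq]]; last first.
  apply/c0/trivial_on0 => a ap; have := fd a ap.
  by rewrite /pow_char k_eq mulnC exprM => ->; rewrite expr1n.
have fr : forall a, coprime a p -> (f a ^+ (k %% d) = 1)%R.
  move=> a ap; have := fk a ap; have := fd a ap; rewrite /pow_char {1}(divn_eq k d).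
  by rewrite exprD mulnC exprM => ->; rewrite expr1n mul1r.
rewrite /dvdn; apply: contraT; rewrite -lt0n => r_gt0.
have := d_min _ r_gt0 (proj2 (trivial_on0 _ _) fr).
by rewrite leqNgt ltn_pmod.
Qed.

Lemma eq1_of_expr_coprime (R : pzRingType) (x : R) k n :
  0 < k -> coprime k n -> (x ^+ k = 1 -> x ^+ n = 1 -> x = 1)%R.
Proof.
move=> k_gt0 kn xk xn; have [u _ /dvdnP[v uv]] := Bezoutl n k_gt0.
rewrite (eqP kn) in uv.
have : (x ^+ (1 + u * n) = 1)%R by rewrite uv mulnC exprM xk expr1n.
by rewrite exprD expr1 mulnC exprM xn expr1n mulr1.
Qed.

Section DirichletCharacter.

Variables (p n0 : nat) (chi : nat -> algC).
Hypothesis p_prime : prime p.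
Hypothesis chi_periodic : forall a, chi (a + p ^ n0) = chi a.
Hypothesis chi_eq0 : forall a, (chi a == 0)%R = (p %| a).
Hypothesis chiM : forall a b, chi (a * b) = (chi a * chi b)%R.

Let p_gt1 : 1 < p. Proof. exact: prime_gt1. Qed.

Lemma chi1 : chi 1 = 1%R.
Proof.
have chi1_neq0 : chi 1 != 0%R by rewrite chi_eq0 dvdn1 gtn_eqF.
by apply: (mulIf chi1_neq0); rewrite -chiM mul1r.
Qed.

Lemma chiX a e : chi (a ^ e) = (chi a ^+ e)%R.
Proof. by elim: e => [|e IHe]; rewrite ?expn0 ?chi1 // expnS chiM IHe exprS. Qed.

Lemma chi_periodic_mod a b : a = b %[mod p ^ n0] -> chi a = chi b.
Proof.
have chi_addM c q : chi (c + q * p ^ n0) = chi c.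
  by elim: q => [|q IHq]; rewrite ?mul0n ?addn0 // mulSn addnCA addnC chi_periodic.
by move=> ab; rewrite (divn_eq a (p ^ n0)) (divn_eq b (p ^ n0)) ab addnC chi_addM addnC chi_addM.
Qed.

Lemma trivial_on_period : trivial_on p chi n0.
Proof. by move=> a _ a1; rewrite (chi_periodic_mod a1) chi1. Qed.

Lemma trivial_on_pow_totient : trivial_on p (pow_char (totient (p ^ n0)) chi) 0.
Proof.
apply/trivial_on0 => a ap; rewrite /pow_char -chiX -chi1; apply: chi_periodic_mod.
by apply: Euler_exp_totient; rewrite coprimeXr.
Qed.

Lemma chi_eq_mod N x y : trivial_on p chi N -> coprime x p -> coprime y p ->
  x = y %[mod p ^ N] -> chi x = chi y.
Proof.
move=> chiN xp yp xy.
have totient_gt0 : 0 < totient (p ^ N) by rewrite totient_gt0 expn_gt0 prime_gt0.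
pose z := y ^ (totient (p ^ N)).-1.
have yz : y * z = y ^ totient (p ^ N) by rewrite /z -expnS prednK.
have yz1 : y * z = 1 %[mod p ^ N] by rewrite yz Euler_exp_totient // coprimeXr.
have zp : coprime z p by rewrite coprimeXl.
have chi_z_neq0 : chi z != 0%R by rewrite chi_eq0 -prime_coprime // coprime_sym.
apply: (mulIf chi_z_neq0); rewrite -!chiM !chiN ?coprimeMl ?xp ?yp ?zp //.
by rewrite -modnMml xy modnMml.
Qed.

(* On the pro-p group 1 + p Z_p the character has p-power order, so prime-to-p powers
   are faithful. *)
Lemma trivial_on_of_pow_coprime k m : ~~ (p %| k) -> 0 < m ->
  trivial_on p (pow_char k chi) m -> trivial_on p chi m.
Proof.
move=> p_ndvd_k m_gt0 chik a ap a1.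
have k_gt0 : 0 < k by case: k p_ndvd_k {chik} => //; rewrite dvdn0.
apply: (@eq1_of_expr_coprime _ _ k (p ^ n0)) => //.
- by rewrite coprimeXr // coprime_sym prime_coprime.
- exact: chik.
rewrite -chiX -chi1; apply: chi_periodic_mod; apply: (@eq_modn_expn_le _ _ n0.+1) => //.
by apply: expn_expn_prime_mod1; rewrite // -(expn1 p) (eq_modn_expn_le m_gt0 a1).
Qed.

Lemma trivial_on_pow_prime N : 1 < N -> trivial_on p chi N ->
  trivial_on p (pow_char p chi) (N - 1).
Proof.
move=> N_gt1 chiN a ap a1; rewrite /pow_char -chiX.
apply: chiN; first exact: coprimeXl.
have -> : N = (N - 1).+1 by lia.
by apply: expn_prime_mod1 => //; lia.
Qed.

(* The congruence says that (1 + p^(N-2))^p generates 1 + p^(N-1) Z_p modulo 1 + p^N Z_p. *)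
Lemma trivial_on_of_pow_prime N : 2 < N ->
  (1 + p ^ (N - 2)) ^ p = 1 + p ^ (N - 1) %[mod p ^ N] ->
  trivial_on p chi N -> trivial_on p (pow_char p chi) (N - 2) -> trivial_on p chi (N - 1).
Proof.
move=> N_gt2 gen chiN chip b bp b1.
have q_gt1 : 1 < p ^ (N - 1) by rewrite -(expn0 p) ltn_exp2l //; lia.
have g1p : coprime (1 + p ^ (N - 1)) p.
  by apply: (@coprime_of_eq1_mod _ (N - 1)); rewrite ?modnDr //; lia.
have g2p : coprime (1 + p ^ (N - 2)) p.
  by apply: (@coprime_of_eq1_mod _ (N - 2)); rewrite ?modnDr //; lia.
have dv : p ^ N %| (p ^ (N - 1)) ^ 2 by rewrite -expnM dvdn_exp2l //; lia.
have -> : chi b = chi ((1 + p ^ (N - 1)) ^ (b %/ p ^ (N - 1))).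
  apply: (chi_eq_mod chiN) => //; first exact: coprimeXl.
  move: (b %/ _) (modn1_decomp q_gt1 b1) => s ->.
  have := expn_1addM_modsq (p ^ (N - 1)) 1 s; rewrite !muln1 => sq.
  by rewrite -(modn_dvdm (1 + _ * s) dv) -[in RHS](modn_dvdm _ dv) sq mulnC.
rewrite chiX -(chi_eq_mod chiN _ g1p gen) ?coprimeXl // chiX.
have := chip _ g2p (modnDr _ _); rewrite /pow_char => ->.
by rewrite expr1n.
Qed.

Lemma trivial_on_pow_of_exponent m e : (forall a, coprime a p -> a ^ e = 1 %[mod p ^ m]) ->
  trivial_on p chi m -> trivial_on p (pow_char e chi) 0.
Proof.
move=> ae1 chim; apply/trivial_on0 => a ap.
by rewrite /pow_char -chiX chim ?coprimeXl ?ae1.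
Qed.

Lemma is_cond_exp_pow_coprime N k : is_cond_exp p chi N -> 1 < N -> ~~ (p %| k) ->
  is_cond_exp p (pow_char k chi) N.
Proof.
move=> [chiN N_min] N_gt1 p_ndvd_k; split=> [|m chikm]; first exact: trivial_on_pow.
have chik1 : trivial_on p (pow_char k chi) (maxn m 1) by apply: trivial_on_le chikm; lia.
have := N_min _ (trivial_on_of_pow_coprime p_ndvd_k _ chik1); lia.
Qed.

Lemma is_cond_exp_pow_prime N : is_cond_exp p chi N -> 2 < N ->
  (1 + p ^ (N - 2)) ^ p = 1 + p ^ (N - 1) %[mod p ^ N] ->
  is_cond_exp p (pow_char p chi) (N - 1).
Proof.
move=> [chiN N_min] N_gt2 gen; apply: is_cond_exp_intro.
  by apply: trivial_on_pow_prime => //; lia.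
have -> : (N - 1).-1 = N - 2 by lia.
by move/(trivial_on_of_pow_prime N_gt2 gen chiN)/N_min; lia.
Qed.

Variables (N c2 c3 d : nat).
Hypothesis condN : is_cond_exp p chi N.
Hypothesis N_gt0 : 0 < N.
Hypothesis cond2 : is_cond_exp p (pow_char 2 chi) c2.
Hypothesis cond3 : is_cond_exp p (pow_char 3 chi) c3.
Hypothesis orderd : unit_order p chi d.

Let d_neq1 : d != 1.
Proof.
apply: contraTneq N_gt0 => d1; rewrite lt0n negbK.
by rewrite (is_cond_exp_pow_eq0 orderd (_ : is_cond_exp p (pow_char 1 chi) N)) ?d1 ?pow_char1.
Qed.

Let cond_pow_le1 k c : N = 1 -> is_cond_exp p (pow_char k chi) c -> c <= 1.
Proof.
by move=> N1 [_ c_min]; apply/c_min/trivial_on_pow; rewrite -N1; apply: (proj1 condN).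
Qed.

Lemma sym3_cond_exp_ge5 : 4 < p ->
  N + c2 + c3 = (if (1 < N) || ((N == 1) && (3 < d)) then 3 * N else 3 * N - 1).
Proof.
move=> p_gt4; have p_ndvd k : 0 < k < 5 -> ~~ (p %| k).
  by case/andP=> k_gt0 k_lt5; rewrite gtnNdvd //; lia.
have [N_gt1 | N_le1] := ltnP 1 N.
  rewrite (is_cond_exp_unique cond2 (is_cond_exp_pow_coprime condN N_gt1 (p_ndvd 2 isT))).
  rewrite (is_cond_exp_unique cond3 (is_cond_exp_pow_coprime condN N_gt1 (p_ndvd 3 isT))).
  by rewrite /=; lia.
have N1 : N = 1 by lia.
rewrite N1 /=; have c2_le1 := cond_pow_le1 N1 cond2; have c3_le1 := cond_pow_le1 N1 cond3.
have c2d := is_cond_exp_pow_eq0 orderd cond2; have c3d := is_cond_exp_pow_eq0 orderd cond3.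
have [d_gt3 | d_le3] := ltnP 3 d.
  move: c2d c3d; rewrite !gtnNdvd ?d_gt3 ?(ltnW d_gt3) //.
  by move=> /eqP c2_neq0 /eqP c3_neq0 /=; lia.
have [d2 | d3] : d = 2 \/ d = 3 by case: orderd => d_gt0 _ _; move: d_neq1; lia.
- move: c2d c3d; rewrite d2; lia.
- move: c2d c3d; rewrite d3; lia.
Qed.

Lemma sym3_cond_exp_3 : p = 3 ->
  N + c2 + c3 = (if (N == 2) && (d == 3) then 2 * N else 3 * N - 1).
Proof.
move=> p3; have c3d := is_cond_exp_pow_eq0 orderd cond3.
have p_ndvd2 : ~~ (p %| 2) by rewrite p3.
have [N_gt2 | N_le2] := ltnP 2 N.
  have gen : (1 + p ^ (N - 2)) ^ p = 1 + p ^ (N - 1) %[mod p ^ N].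
    by rewrite p3 modn_1add3X_cube.
  have := is_cond_exp_pow_prime condN N_gt2 gen; rewrite [in pow_char _]p3.
  move=> /(is_cond_exp_unique cond3) ->.
  rewrite (is_cond_exp_unique cond2 (is_cond_exp_pow_coprime condN (ltnW N_gt2) p_ndvd2)).
  by rewrite gtn_eqF //=; lia.
have [N2 | N1] : N = 2 \/ N = 1 by lia.
  have N_gt1 : 1 < N by rewrite N2.
  rewrite (is_cond_exp_unique cond2 (is_cond_exp_pow_coprime condN N_gt1 p_ndvd2)) N2 /=.
  have c3_le1 : c3 <= 1.
    apply: (proj2 cond3); have := trivial_on_pow_prime N_gt1 (proj1 condN).
    by rewrite [in pow_char _]p3 N2.
  have [d3 | d_neq3] := eqVneq d 3; first by move: c3d; rewrite d3; lia.
  by move: c3d; rewrite (introF (prime_nt_dvdP _ d_neq1)) //; lia.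
have c2_0 : c2 = 0.
  apply/(is_cond_exp_eq0 cond2)/(@trivial_on_pow_of_exponent 1).
    by move=> a /Euler_exp_totient; rewrite p3 totient_prime.
  by rewrite -N1; apply: (proj1 condN).
have d2 : d = 2.
  by apply/(prime_nt_dvdP _ d_neq1); rewrite // -(is_cond_exp_pow_eq0 orderd cond2) c2_0.
by move: c3d (cond_pow_le1 N1 cond3); rewrite N1 c2_0 d2 /=; lia.
Qed.

Lemma sym3_cond_exp_2 : p = 2 ->
  N + c2 + c3 = (if 3 < N then 3 * N - 1 else 2 * N).
Proof.
move=> p2; have odd_mod2 a : coprime a p -> a ^ 1 = 1 %[mod p ^ 1].
  by rewrite p2 coprimen2 expn1 !expn1 !modn2 => ->.
have N_gt1 : 1 < N.
  rewrite ltn_neqAle N_gt0 andbT; apply/eqP => N1.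
  have chi_triv1 : trivial_on p chi 1 by rewrite N1; apply: (proj1 condN).
  have := trivial_on_pow_of_exponent odd_mod2 chi_triv1.
  by rewrite pow_char1 -(is_cond_exp_eq0 condN) -N1.
have p_ndvd3 : ~~ (p %| 3) by rewrite p2.
rewrite (is_cond_exp_unique cond3 (is_cond_exp_pow_coprime condN N_gt1 p_ndvd3)).
have [N_gt3 | N_le3] := ltnP 3 N.
  have gen : (1 + p ^ (N - 2)) ^ p = 1 + p ^ (N - 1) %[mod p ^ N].
    by rewrite p2 modn_1add2X_sqr.
  have := is_cond_exp_pow_prime condN (ltnW N_gt3) gen; rewrite [in pow_char _]p2.
  by move=> /(is_cond_exp_unique cond2) ->; lia.
have c2_0 : c2 = 0.
  apply/(is_cond_exp_eq0 cond2)/(@trivial_on_pow_of_exponent 3).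
    by move=> a; rewrite p2 coprimen2; apply: sqr_odd_mod8.
  exact: trivial_on_le N_le3 (proj1 condN).
by rewrite c2_0; lia.
Qed.

End DirichletCharacter.

Theorem mainTheorem7 (p : nat) (mu1 mu2 : qpchar) :
  prime p ->
  valid_qpchar p mu1 -> valid_qpchar p mu2 ->
  p_minimal p mu1 mu2 ->
  unramified p mu1 ->
  (1 <= ps_cond p mu1 mu2)%N ->
  let N := ps_cond p mu1 mu2 in
  let om := qmul mu1 mu2 in
  let a3 := wd_cond p (sym3 mu1 mu2) in
  [/\ (5 <= p)%N ->
        a3 = (if (1 < N)%N || ((N == 1)%N && (3 < res_order p om)%N)
              then 3 * N else 3 * N - 1)%N,
      p = 3%N ->
        a3 = (if (N == 2)%N && (res_order p om == 3)%N
              then 2 * N else 3 * N - 1)%N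
    & p = 2%N ->
        a3 = (if (3 < N)%N then 3 * N - 1 else 2 * N)%N].
Proof.
move=> p_pr _ [[[n0 chi_per] chi_eq0 chiM] _] _ /trivial_on0 mu1_unr N_gt0 N om a3.
set chi := qres mu2 in chi_per chi_eq0 chiM.
have exists_cond k : exists c, is_cond_exp p (pow_char k chi) c.
  by apply: exists_is_cond_exp; exists n0; apply/trivial_on_pow/trivial_on_period.
have [c1 cond1] := exists_cond 1; have [c2 cond2] := exists_cond 2.
have [c3 cond3] := exists_cond 3.
have cond0 : is_cond_exp p (pow_char 0 chi) 0 by split=> // a _ _; rewrite /pow_char expr0.
have NE : N = c1.
  by rewrite /N /ps_cond /wd_cond /= (cond_exp_eq (mu := mu1) cond0)
    ?(cond_exp_eq (mu := mu2) cond1) ?addn0.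
have a3E : a3 = c1 + c2 + c3.
  rewrite /a3 /wd_cond; have -> : [seq cond_exp p mu | mu <- sym3 mu1 mu2] = [:: 0; c1; c2; c3].
    congr [:: _; _; _; _]; [apply: (cond_exp_eq cond0) | apply: (cond_exp_eq cond1)
      | apply: (cond_exp_eq cond2) | apply: (cond_exp_eq cond3)];
    by move=> a ap /=; rewrite /pow_char ?mu1_unr // ?exprS ?expr0 ?mulr1 ?mul1r.
  by rewrite /= add0n addn0 addnA.
have orderd : unit_order p chi (res_order p om).
  apply: res_orderP => [a ap | ]; first by rewrite /= mu1_unr // mul1r.
  exists (totient (p ^ n0)); split; first by rewrite totient_gt0 expn_gt0 prime_gt0.
  by apply: trivial_on_pow_totient.
rewrite pow_char1 -NE in cond1; rewrite a3E -NE.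
split=> [p_gt4 | p3 | p2].
- exact (sym3_cond_exp_ge5 p_pr chi_per chi_eq0 chiM cond1 N_gt0 cond2 cond3 orderd p_gt4).
- exact (sym3_cond_exp_3 p_pr chi_per chi_eq0 chiM cond1 N_gt0 cond2 cond3 orderd p3).
- exact (sym3_cond_exp_2 p_pr chi_per chi_eq0 chiM cond1 N_gt0 cond2 cond3 orderd p2).
Qed.
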